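(* (i) For every $n\ge 2$ there is a locally finite $n$-directed-distributive variety which is not $(2n-1)$-reversed-modular, hence not $(2n-2)$-modular. (ii) Every $n$-directed-distributive variety satisfies the congruence identity $\alpha(\beta\circ\gamma\circ\beta)\subseteq\alpha\beta\circ\alpha\gamma\circ\stackrel{2n-1}{\dots}\circ\alpha\beta$; in particular it is $(2n-1)$-modular.
   Context: Directed J\'onsson terms: ternary terms $t_0,\dots,t_n$ with $t_0(x,y,z)=x$, $t_n(x,y,z)=z$, $t_h(x,y,x)=x$ for all $0\le h\le n$, and $t_h(x,z,z)=t_{h+1}(x,x,z)$ for all $0\le h<n$. A variety is $n$-directed-distributive if it has directed J\'onsson terms $t_0,\dots,t_n$. Day terms: $4$-ary $u_0,\dots,u_m$ with $u_k(x,y,y,x)=x$ for all $k$, $u_0(x,y,z,w)=x$, $u_m(x,y,z,w)=w$, $u_k(x,x,w,w)=u_{k+1}(x,x,w,w)$ for even $k$, $u_k(x,y,y,w)=u_{k+1}(x,y,y,w)$ for odd $k$; reversed Day terms: even/odd exchanged in these last two. $m$-modular ($m$-reversed-modular): having Day (reversed Day) terms $u_0,\dots,u_m$. In congruence identities juxtaposition is intersection, $\circ$ composition, and $X\circ Y\circ\stackrel{k}{\dots}\circ Z$ is the alternating composition $X\circ Y\circ X\circ\cdots$ with $k$ factors (last factor $Z$). *)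

From Stdlib Require Import Arith List.
From Stdlib Require Fin.
Import ListNotations.

Record signature := Signature {
  op : Type;
  arity : op -> nat }.

Record algebra (S : signature) := Algebra {
  carrier : Type;
  interp : forall o : op S, (Fin.t (arity S o) -> carrier) -> carrier }.
Arguments carrier {S} _.
Arguments interp {S} _ _ _.

Inductive term (S : signature) (V : Type) : Type :=
  | Var : V -> term S V
  | App : forall o : op S, (Fin.t (arity S o) -> term S V) -> term S V.
Arguments Var {S V} _.
Arguments App {S V} _ _.

Fixpoint eval {S : signature} {V : Type} (A : algebra S) (env : V -> carrier A)
  (t : term S V) : carrier A :=
  match t with
  | Var v => env v
  | App o args => interp A o (fun i => eval A env (args i))
  end.

(** Identities are pairs of terms in countably many variables; a variety is
    the class of models of a set of identities (equational class). *)
Definition identity (S : signature) : Type := (term S nat * term S nat)%type.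

Definition models {S : signature} (A : algebra S) (Sigma : identity S -> Prop) : Prop :=
  forall e, Sigma e -> forall env : nat -> carrier A, eval A env (fst e) = eval A env (snd e).

Inductive var3 := X3 | Y3 | Z3.
Inductive var4 := X4 | Y4 | Z4 | W4.

Definition env3 {T : Type} (x y z : T) (v : var3) : T :=
  match v with X3 => x | Y3 => y | Z3 => z end.
Definition env4 {T : Type} (x y z w : T) (v : var4) : T :=
  match v with X4 => x | Y4 => y | Z4 => z | W4 => w end.

Definition ap3 {S} (A : algebra S) (t : term S var3) (x y z : carrier A) : carrier A :=
  eval A (env3 x y z) t.
Definition ap4 {S} (A : algebra S) (u : term S var4) (x y z w : carrier A) : carrier A :=
  eval A (env4 x y z w) u.

Definition directed_distributive (S : signature) (Sigma : identity S -> Prop) (n : nat) : Prop :=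
  exists t : nat -> term S var3,
    forall A : algebra S, models A Sigma ->
    forall x y z : carrier A,
      ap3 A (t 0) x y z = x /\
      ap3 A (t n) x y z = z /\
      (forall h, h <= n -> ap3 A (t h) x y x = x) /\
      (forall h, h < n -> ap3 A (t h) x z z = ap3 A (t (Datatypes.S h)) x x z).

Definition has_day_terms (rev : bool) (S : signature) (Sigma : identity S -> Prop) (m : nat) : Prop :=
  exists u : nat -> term S var4,
    forall A : algebra S, models A Sigma ->
    forall x y z w : carrier A,
      (forall k, k <= m -> ap4 A (u k) x y y x = x) /\
      ap4 A (u 0) x y z w = x /\
      ap4 A (u m) x y z w = w /\
      (forall k, k < m -> Nat.even k = negb rev ->
          ap4 A (u k) x x w w = ap4 A (u (Datatypes.S k)) x x w w) /\
      (forall k, k < m -> Nat.even k = rev ->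
          ap4 A (u k) x y y w = ap4 A (u (Datatypes.S k)) x y y w).

Definition modular S Sigma m := has_day_terms false S Sigma m.
Definition reversed_modular S Sigma m := has_day_terms true S Sigma m.

Definition finite (T : Type) : Prop := exists l : list T, forall x, In x l.

Definition subuniverse {S} (A : algebra S) (P : carrier A -> Prop) : Prop :=
  forall o (args : Fin.t (arity S o) -> carrier A),
    (forall i, P (args i)) -> P (interp A o args).

Definition generated_by {S} (A : algebra S) (g : list (carrier A)) : Prop :=
  forall a : carrier A,
    forall P : carrier A -> Prop, subuniverse A P -> (forall x, In x g -> P x) -> P a.

Definition locally_finite (S : signature) (Sigma : identity S -> Prop) : Prop :=
  forall A : algebra S, models A Sigma ->
  forall g : list (carrier A), generated_by A g -> finite (carrier A).

Definition congruence {S} (A : algebra S) (R : carrier A -> carrier A -> Prop) : Prop :=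
  (forall x, R x x) /\ (forall x y, R x y -> R y x) /\
  (forall x y z, R x y -> R y z -> R x z) /\
  (forall o (a b : Fin.t (arity S o) -> carrier A),
     (forall i, R (a i) (b i)) -> R (interp A o a) (interp A o b)).

Definition rcomp {T} (R Q : T -> T -> Prop) : T -> T -> Prop :=
  fun x z => exists y, R x y /\ Q y z.
Definition rmeet {T} (R Q : T -> T -> Prop) : T -> T -> Prop :=
  fun x y => R x y /\ Q x y.

Fixpoint alt_comp {T} (R Q : T -> T -> Prop) (k : nat) : T -> T -> Prop :=
  match k with
  | 0 => fun x y => x = y
  | S k' => rcomp R (alt_comp Q R k')
  end.

From Stdlib Require Import Arith Lia List Classical ClassicalEpsilon FunctionalExtensionality.
Import ListNotations.

(* (ii) Given x alpha y and x beta a gamma b beta y, the elements t_h(x,b,y) and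
   t_(h+1)(x,a,y) all lie in the alpha-class of x (since t_h(x,q,x) = x), and
   consecutive ones are beta-related via t_h(x,y,y) = t_(h+1)(x,x,y), resp.
   gamma-related via a gamma b: an alternating chain of 2n - 1 steps.  Replacing the
   middle variable by z, resp. y, in the same interleaved terms gives Day terms.
   (i) On the chain 0 < ... < N = n - 1 we take N ternary operations that, together
   with the projections x and z, are directed Jonsson terms.  All operations
   preserve <= and the relation b <= a + c + 1; this forces reversed Day terms to
   climb from 0 to N at speed at most 1/2, so 2N + 1 of them do not suffice.  The
   variety generated by a finite algebra is locally finite, and m-modular implies
   (m + 1)-reversed-modular, which gives the failure of (2n - 2)-modularity. *)

Fixpoint rename {Sg : signature} {V W : Type} (f : V -> W) (t : term Sg V) : term Sg W :=
  match t with
  | Var v => Var (f v)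
  | App o a => App o (fun i => rename f (a i))
  end.

Lemma eval_rename {Sg : signature} {V W : Type} (A : algebra Sg) (f : V -> W)
  (env : W -> carrier A) (t : term Sg V) :
  eval A env (rename f t) = eval A (fun v => env (f v)) t.
Proof.
  induction t as [v|o a IH]; simpl; [reflexivity|].
  f_equal. apply functional_extensionality. intro i. apply IH.
Qed.

Lemma eval_env3 {Sg : signature} (A : algebra Sg) (env : var3 -> carrier A) (p : term Sg var3) :
  eval A env p = ap3 A p (env X3) (env Y3) (env Z3).
Proof. unfold ap3. f_equal. apply functional_extensionality. now intros []. Qed.

Lemma ap3_rename {Sg : signature} (A : algebra Sg) (f : var3 -> var3) (p : term Sg var3)
  (x y z : carrier A) :
  ap3 A (rename f p) x y z
  = ap3 A p (env3 x y z (f X3)) (env3 x y z (f Y3)) (env3 x y z (f Z3)).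
Proof. unfold ap3 at 1. rewrite eval_rename. apply eval_env3. Qed.

Lemma ap4_rename {Sg : signature} (A : algebra Sg) (f : var3 -> var4) (p : term Sg var3)
  (x y z w : carrier A) :
  ap4 A (rename f p) x y z w
  = ap3 A p (env4 x y z w (f X3)) (env4 x y z w (f Y3)) (env4 x y z w (f Z3)).
Proof. unfold ap4. rewrite eval_rename. apply eval_env3. Qed.

Definition theory {Sg : signature} (A : algebra Sg) : identity Sg -> Prop :=
  fun e => forall env : nat -> carrier A, eval A env (fst e) = eval A env (snd e).

Lemma models_theory {Sg : signature} (A : algebra Sg) : models A (theory A).
Proof. intros e H. exact H. Qed.

Lemma theory_transfer {Sg : signature} {V : Type} (code : V -> nat) (decode : nat -> V)
  (code_K : forall v, decode (code v) = v) (A B : algebra Sg) (HB : models B (theory A))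
  (p q : term Sg V) :
  (forall env : V -> carrier A, eval A env p = eval A env q) ->
  forall env : V -> carrier B, eval B env p = eval B env q.
Proof.
  intros Hpq env.
  assert (Hcode : forall r, eval B (fun i => env (decode i)) (rename code r) = eval B env r).
  { intro r. rewrite eval_rename. f_equal. apply functional_extensionality. intro v.
    now rewrite code_K. }
  rewrite <- (Hcode p), <- (Hcode q).
  apply (HB (rename code p, rename code q)). intro env'. simpl. rewrite !eval_rename. apply Hpq.
Qed.

Definition code3 (v : var3) : nat := match v with X3 => 0 | Y3 => 1 | Z3 => 2 end.
Definition decode3 (i : nat) : var3 := match i with 0 => X3 | 1 => Y3 | _ => Z3 end.

Lemma identity3_transfer {Sg : signature} (A B : algebra Sg) (HB : models B (theory A))
  (p q : term Sg var3) :
  (forall x y z : carrier A, ap3 A p x y z = ap3 A q x y z) ->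
  forall x y z : carrier B, ap3 B p x y z = ap3 B q x y z.
Proof.
  intros Hpq x y z. unfold ap3.
  apply (theory_transfer code3 decode3 (ltac:(now intros [])) A B HB).
  intro env. rewrite !eval_env3. apply Hpq.
Qed.

Lemma congruence_eval {Sg : signature} (A : algebra Sg) (th : carrier A -> carrier A -> Prop)
  (Hth : congruence A th) {V : Type} (p : term Sg V) (e1 e2 : V -> carrier A) :
  (forall v, th (e1 v) (e2 v)) -> th (eval A e1 p) (eval A e2 p).
Proof.
  intro H. induction p as [v|o a IH]; simpl; [apply H|].
  destruct Hth as (_ & _ & _ & Hop). apply Hop. intro i. apply IH.
Qed.

Lemma congruence_ap3 {Sg : signature} (A : algebra Sg) (th : carrier A -> carrier A -> Prop)
  (Hth : congruence A th) (p : term Sg var3) (x y z x' y' z' : carrier A) :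
  th x x' -> th y y' -> th z z' -> th (ap3 A p x y z) (ap3 A p x' y' z').
Proof. intros. unfold ap3. apply congruence_eval; [exact Hth|]. now intros []. Qed.

Lemma alt_comp_chain {T : Type} (K : nat) : forall (R Q : T -> T -> Prop) (e : nat -> T),
  (forall h, 2 * h < K -> R (e (2 * h)) (e (2 * h + 1))) ->
  (forall h, 2 * h + 1 < K -> Q (e (2 * h + 1)) (e (2 * h + 2))) ->
  alt_comp R Q K (e 0) (e K).
Proof.
  induction K as [|K IH]; intros R Q e HR HQ; simpl; [reflexivity|].
  exists (e 1). split; [apply (HR 0); lia|].
  apply (IH Q R (fun k => e (S k))); intros h Hh; cbv beta.
  - replace (S (2 * h)) with (2 * h + 1) by lia. replace (S (2 * h + 1)) with (2 * h + 2) by lia.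
    apply HQ. lia.
  - replace (S (2 * h + 1)) with (2 * S h) by lia. replace (S (2 * h + 2)) with (2 * S h + 1) by lia.
    apply HR. lia.
Qed.

Definition interleave {X : Type} (ev od : nat -> X) (k : nat) : X :=
  if Nat.even k then ev (Nat.div2 k) else od (S (Nat.div2 k)).

Lemma interleave_even {X : Type} (ev od : nat -> X) h : interleave ev od (2 * h) = ev h.
Proof. unfold interleave. now rewrite Nat.even_even, Nat.div2_even. Qed.

Lemma interleave_odd {X : Type} (ev od : nat -> X) h : interleave ev od (2 * h + 1) = od (S h).
Proof. unfold interleave. now rewrite Nat.even_odd, Nat.div2_odd'. Qed.

Fixpoint bounded {Sg : signature} (k : nat) (t : term Sg nat) : Prop :=
  match t with
  | Var i => i < k
  | App o a => forall i, bounded k (a i)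
  end.

Lemma eval_bounded {Sg : signature} (A : algebra Sg) (k : nat) (t : term Sg nat)
  (e1 e2 : nat -> carrier A) :
  bounded k t -> (forall i, i < k -> e1 i = e2 i) -> eval A e1 t = eval A e2 t.
Proof.
  intros Ht He. induction t as [v|o a IH]; simpl in *; [now apply He|].
  f_equal. apply functional_extensionality. intro i. apply IH, Ht.
Qed.

Lemma generated_by_bounded_terms {Sg : signature} (B : algebra Sg) (g : list (carrier B))
  (d : carrier B) :
  generated_by B g -> forall b, exists t, bounded (length g) t /\ b = eval B (fun i => nth i g d) t.
Proof.
  intros Hg b.
  apply (Hg b (fun b => exists t, bounded (length g) t /\ b = eval B (fun i => nth i g d) t)).
  - intros o args Hargs.
    set (arg_term i := proj1_sig (constructive_indefinite_description _ (Hargs i))).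
    exists (App o arg_term). split.
    + intro i. exact (proj1 (proj2_sig (constructive_indefinite_description _ (Hargs i)))).
    + simpl. f_equal. apply functional_extensionality. intro i.
      exact (proj2 (proj2_sig (constructive_indefinite_description _ (Hargs i)))).
  - intros x Hx. destruct (In_nth g x d Hx) as [i [Hi Hxi]].
    exists (Var i). split; [exact Hi | symmetry; exact Hxi].
Qed.

Lemma bounded_terms_agree {Sg : signature} (A : algebra Sg) (a0 : carrier A) (k : nat)
  (t t' : term Sg nat) :
  bounded k t -> bounded k t' ->
  (forall s, length s = k -> eval A (fun i => nth i s a0) t = eval A (fun i => nth i s a0) t') ->
  forall env, eval A env t = eval A env t'.
Proof.
  intros Ht Ht' Hs env.
  set (s := map env (seq 0 k)).
  assert (Henv : forall i, i < k -> env i = nth i s a0).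
  { intros i Hi. unfold s.
    rewrite (nth_indep _ a0 (env 0)) by (now rewrite length_map, length_seq).
    now rewrite map_nth, seq_nth. }
  rewrite (eval_bounded A k t _ _ Ht Henv), (eval_bounded A k t' _ _ Ht' Henv).
  apply Hs. unfold s. now rewrite length_map, length_seq.
Qed.

Fixpoint tuples {X : Type} (l : list X) (k : nat) : list (list X) :=
  match k with
  | 0 => [[]]
  | S k => flat_map (fun a => map (cons a) (tuples l k)) l
  end.

Lemma in_tuples {X : Type} (l : list X) :
  (forall a, In a l) -> forall s, In s (tuples l (length s)).
Proof.
  intro Hl. induction s as [|a s IH]; simpl; [now left|].
  apply in_flat_map. exists a. split; [apply Hl | now apply in_map].
Qed.

Lemma finite_of_functional_cover {X Y : Type} (R : X -> Y -> Prop) (l : list X) :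
  (forall x y y', R x y -> R x y' -> y = y') ->
  (forall y, exists x, In x l /\ R x y) -> finite Y.
Proof.
  intros Hfun Hcov.
  assert (Himg : forall l : list X, exists ly, forall x y, In x l -> R x y -> In y ly).
  { induction l0 as [|x l0 [ly Hly]]; [now exists [] |].
    destruct (classic (exists y0, R x y0)) as [[y0 Hy0] | Hno].
    - exists (y0 :: ly). intros x' y [<- | Hx'] Hr; [left; eapply Hfun; eauto | right; eauto].
    - exists ly. intros x' y [<- | Hx'] Hr; [exfalso; eauto | eauto]. }
  destruct (Himg l) as [ly Hly]. exists ly. intro y.
  destruct (Hcov y) as [x [Hx Hr]]. eauto.
Qed.

(* A k-generated model of the theory of A is a quotient of the subalgebra of
   A^(A^k) generated by the k projections. *)
Lemma finite_algebra_locally_finite {Sg : signature} (A : algebra Sg) (a0 : carrier A)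
  (la : list (carrier A)) :
  (forall a, In a la) -> locally_finite Sg (theory A).
Proof.
  intros Hla B HB g Hg.
  destruct (classic (inhabited (carrier B))) as [[d] | Hempty].
  2: { exists []. intro b. exact (Hempty (inhabits b)). }
  set (k := length g).
  set (table t := map (fun s => eval A (fun i => nth i s a0) t) (tuples la k)).
  apply (finite_of_functional_cover
           (fun key b => exists t, bounded k t /\ table t = key /\ b = eval B (fun i => nth i g d) t)
           (tuples la (length (tuples la k)))).
  - intros key b b' [t [Ht [<- ->]]] [t' [Ht' [Htab ->]]].
    apply (HB (t, t')). intro env. simpl.
    apply (bounded_terms_agree A a0 k); [exact Ht | exact Ht' |].
    intros s Hs. symmetry in Htab. apply (proj1 map_ext_in_iff Htab).
    rewrite <- Hs. now apply in_tuples.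
  - intro b. destruct (generated_by_bounded_terms B g d Hg b) as [t [Ht Hb]].
    exists (table t). split; [| now exists t].
    replace (length (tuples la k)) with (length (table t)) by apply length_map.
    now apply in_tuples.
Qed.

Definition median (a b c : nat) : nat :=
  if a <=? b then (if c <=? a then a else if c <=? b then c else b)
  else (if c <=? b then b else if c <=? a then c else a).

Ltac case_lia :=
  repeat (match goal with
          | |- context [?a <=? ?b] => destruct (Nat.leb_spec a b)
          | |- context [?a <? ?b] => destruct (Nat.ltb_spec a b)
          | _ : context [?a <=? ?b] |- _ => destruct (Nat.leb_spec a b)
          | _ : context [?a <? ?b] |- _ => destruct (Nat.ltb_spec a b)
          end; cbv iota beta in *; try lia).

Definition sig_chain : signature := Signature nat (fun _ => 3).

Definition args3 {X : Type} (a b c : X) (i : Fin.t 3) : X :=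
  match proj1_sig (Fin.to_nat i) with 0 => a | 1 => b | _ => c end.

Section ChainAlgebra.

Variable N : nat.

Definition chain_op (h x y z : nat) : nat :=
  if x <=? z then median x z (h - 1 + (if h <=? y then 1 else 0))
  else median x z (N - h + (if N - h <? y then 1 else 0)).

Definition jonsson_op (h x y z : nat) : nat :=
  match h with 0 => x | S h' => if h' <? N then chain_op h x y z else z end.

Lemma chain_op_le h x y z : x <= N -> z <= N -> chain_op h x y z <= N.
Proof. intros. unfold chain_op, median. case_lia. Qed.

Lemma chain_op_mono h x y z x' y' z' : 1 <= h <= N ->
  x <= x' -> y <= y' -> z <= z' -> x' <= N -> z' <= N ->
  chain_op h x y z <= chain_op h x' y' z'.
Proof. intros. unfold chain_op, median. case_lia. Qed.

Lemma chain_op_rho h a1 a2 a3 b1 b2 b3 c1 c2 c3 : 1 <= h <= N ->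
  a1 <= N -> a2 <= N -> a3 <= N -> b1 <= N -> b2 <= N -> b3 <= N ->
  c1 <= N -> c2 <= N -> c3 <= N ->
  b1 <= a1 + c1 + 1 -> b2 <= a2 + c2 + 1 -> b3 <= a3 + c3 + 1 ->
  chain_op h b1 b2 b3 <= chain_op h a1 a2 a3 + chain_op h c1 c2 c3 + 1.
Proof. intros. unfold chain_op, median. case_lia. Qed.

Lemma jonsson_op_xyx h x y : x <= N -> jonsson_op h x y x = x.
Proof. intros. destruct h; simpl; [reflexivity|]. unfold chain_op, median. case_lia. Qed.

Lemma jonsson_op_directed h x z : h <= N -> x <= N -> z <= N ->
  jonsson_op h x z z = jonsson_op (S h) x x z.
Proof. intros. destruct h; simpl; unfold chain_op, median; case_lia. Qed.

Definition chain_elem : Type := {x : nat | x <= N}.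

Definition chain_interp (o : nat) (args : Fin.t 3 -> chain_elem) : chain_elem :=
  let h := S (Nat.min o (N - 1)) in
  exist _ (chain_op h (proj1_sig (args Fin.F1)) (proj1_sig (args (Fin.FS Fin.F1)))
                      (proj1_sig (args (Fin.FS (Fin.FS Fin.F1)))))
          (chain_op_le h _ _ _ (proj2_sig (args Fin.F1)) (proj2_sig (args (Fin.FS (Fin.FS Fin.F1))))).

Definition chain_alg : algebra sig_chain := Algebra sig_chain chain_elem chain_interp.

Lemma chain_elem_eq (a b : chain_elem) : proj1_sig a = proj1_sig b -> a = b.
Proof. destruct a as [a Ha], b as [b Hb]; simpl; intros ->. f_equal. apply le_unique. Qed.

Lemma chain_elems : exists l : list chain_elem, forall a, In a l.
Proof.
  exists (map (fun x => exist (fun x => x <= N) (Nat.min x N) (Nat.le_min_r x N)) (seq 0 (S N))).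
  intros [x Hx]. apply in_map_iff. exists x. split.
  - apply chain_elem_eq. simpl. lia.
  - apply in_seq. lia.
Qed.

Definition bot : chain_elem := exist _ 0 (Nat.le_0_l N).
Definition top : chain_elem := exist _ N (le_n N).

(* Operation symbol o denotes t_(o+1) (symbols o >= N are junk copies of t_N); the
   directed Jonsson terms are t_0 = x, these N operations, and t_(N+1) = z. *)
Definition jonsson_term (h : nat) : term sig_chain var3 :=
  match h with
  | 0 => Var X3
  | S h' => if h' <? N then @App sig_chain var3 h' (args3 (Var X3) (Var Y3) (Var Z3)) else Var Z3
  end.

Lemma jonsson_term_val h (a b c : chain_elem) :
  proj1_sig (ap3 chain_alg (jonsson_term h) a b c)
  = jonsson_op h (proj1_sig a) (proj1_sig b) (proj1_sig c).
Proof.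
  destruct h as [|h]; [reflexivity|].
  unfold jonsson_term, jonsson_op. destruct (Nat.ltb_spec h N); [|reflexivity].
  unfold ap3. simpl. now replace (Nat.min h (N - 1)) with h by lia.
Qed.

Lemma chain_directed_distributive : directed_distributive sig_chain (theory chain_alg) (S N).
Proof.
  exists jonsson_term. intros B HB x y z.
  split; [|split; [|split]].
  - reflexivity.
  - unfold ap3, jonsson_term. now rewrite Nat.ltb_irrefl.
  - intros h _.
    assert (Hxyx : forall a b c : chain_elem,
               ap3 chain_alg (rename (fun v => match v with Z3 => X3 | v => v end) (jonsson_term h)) a b c
               = ap3 chain_alg (Var X3) a b c).
    { intros a b c. rewrite ap3_rename. apply chain_elem_eq. cbn [env3].
      rewrite jonsson_term_val. apply jonsson_op_xyx, proj2_sig. }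
    pose proof (identity3_transfer chain_alg B HB _ _ Hxyx x y z) as H.
    rewrite ap3_rename in H. exact H.
  - intros h Hh.
    assert (Hdir : forall a b c : chain_elem,
               ap3 chain_alg (rename (fun v => match v with Y3 => Z3 | v => v end) (jonsson_term h)) a b c
               = ap3 chain_alg (rename (fun v => match v with Y3 => X3 | v => v end) (jonsson_term (S h))) a b c).
    { intros a b c. rewrite !ap3_rename. apply chain_elem_eq. cbn [env3].
      rewrite !jonsson_term_val. apply jonsson_op_directed; try apply proj2_sig; lia. }
    pose proof (identity3_transfer chain_alg B HB _ _ Hdir x y z) as H.
    rewrite !ap3_rename in H. exact H.
Qed.

Hypothesis N_pos : 1 <= N.

Lemma eval_chain_mono {V : Type} (p : term sig_chain V) (e1 e2 : V -> chain_elem) :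
  (forall v, proj1_sig (e1 v) <= proj1_sig (e2 v)) ->
  proj1_sig (eval chain_alg e1 p) <= proj1_sig (eval chain_alg e2 p).
Proof.
  intro H. induction p as [v|o a IH]; simpl; [apply H|].
  apply chain_op_mono; try apply IH; try apply proj2_sig; lia.
Qed.

Lemma eval_chain_rho {V : Type} (p : term sig_chain V) (e1 e2 e3 : V -> chain_elem) :
  (forall v, proj1_sig (e2 v) <= proj1_sig (e1 v) + proj1_sig (e3 v) + 1) ->
  proj1_sig (eval chain_alg e2 p)
  <= proj1_sig (eval chain_alg e1 p) + proj1_sig (eval chain_alg e3 p) + 1.
Proof.
  intro H. induction p as [v|o a IH]; simpl; [apply H|].
  apply chain_op_rho; try apply IH; try apply proj2_sig; lia.
Qed.

(* Evaluate putative reversed Day terms at (0,0,0,N), (0,0,N,N), (0,N,N,N): the three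
   value sequences are ordered, and the preserved relation b <= a + c + 1, applied with
   u_k(0,N,N,0) = 0, keeps the top one within 1 of the bottom one, so they can only
   rise by one every two steps. *)
Lemma chain_not_reversed_modular :
  ~ reversed_modular sig_chain (theory chain_alg) (2 * N + 1).
Proof.
  intros [u Hu].
  pose proof (Hu chain_alg (models_theory chain_alg)) as Hday. clear Hu.
  set (L k := proj1_sig (ap4 chain_alg (u k) bot bot bot top)).
  set (M k := proj1_sig (ap4 chain_alg (u k) bot bot top top)).
  set (U k := proj1_sig (ap4 chain_alg (u k) bot top top top)).
  assert (HLM : forall k, L k <= M k).
  { intro k. apply eval_chain_mono. intros []; simpl; lia. }
  assert (HMU : forall k, M k <= U k).
  { intro k. apply eval_chain_mono. intros []; simpl; lia. }
  assert (HUL : forall k, k <= 2 * N + 1 -> U k <= L k + 1).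
  { intros k Hk.
    destruct (Hday bot top top bot) as (Hxyyx & _).
    assert (H0 : proj1_sig (ap4 chain_alg (u k) bot top top bot) = 0) by now rewrite Hxyyx.
    enough (proj1_sig (ap4 chain_alg (u k) bot top top top)
            <= proj1_sig (ap4 chain_alg (u k) bot bot bot top)
               + proj1_sig (ap4 chain_alg (u k) bot top top bot) + 1) by (unfold U, L; lia).
    apply eval_chain_rho. intros []; simpl; lia. }
  assert (Heven : forall k, k < 2 * N + 1 -> Nat.even k = true -> L (S k) = L k /\ U (S k) = U k).
  { intros k Hk He. unfold L, U.
    destruct (Hday bot bot bot top) as (_ & _ & _ & _ & HL).
    destruct (Hday bot top top top) as (_ & _ & _ & _ & HU).
    now rewrite (HL k Hk He), (HU k Hk He). }
  assert (Hodd : forall k, k < 2 * N + 1 -> Nat.even k = false -> M (S k) = M k).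
  { intros k Hk He. unfold M.
    destruct (Hday bot bot top top) as (_ & _ & _ & HM & _).
    now rewrite (HM k Hk He). }
  assert (HU0 : U 0 = 0) by (unfold U; now destruct (Hday bot top top top) as (_ & -> & _)).
  assert (HLm : L (2 * N + 1) = N) by (unfold L; now destruct (Hday bot bot bot top) as (_ & _ & -> & _)).
  assert (Hslow : forall k, k <= 2 * N + 1 -> 2 * U k <= k /\ (1 <= k -> 2 * M k + 1 <= k)).
  { induction k as [|k IH]; intros Hk; [rewrite HU0; lia|].
    specialize (IH ltac:(lia)).
    destruct (Nat.even k) eqn:He.
    - destruct (Heven k ltac:(lia) He) as [_ HUk]. pose proof (HMU (S k)). lia.
    - assert (1 <= k) by (destruct k; [discriminate | lia]).
      pose proof (Hodd k ltac:(lia) He). pose proof (HUL (S k) Hk). pose proof (HLM (S k)). lia. }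
  destruct (Heven (2 * N) ltac:(lia) (Nat.even_even N)) as [HL _].
  replace (S (2 * N)) with (2 * N + 1) in HL by lia.
  destruct (Hslow (2 * N) ltac:(lia)) as [_ HM].
  pose proof (HLM (2 * N)). lia.
Qed.

End ChainAlgebra.

Lemma modular_reversed_modular_succ (Sg : signature) (Sigma : identity Sg -> Prop) (m : nat) :
  modular Sg Sigma m -> reversed_modular Sg Sigma (S m).
Proof.
  intros [u Hu]. exists (fun k => match k with 0 => Var X4 | S k' => u k' end).
  intros A HA x y z w. destruct (Hu A HA x y z w) as (Hxyyx & Hfirst & Hlast & Hxxww & Hxyyw).
  split; [|split; [|split; [|split]]].
  - intros [|k] Hk; [reflexivity|]. apply Hxyyx. lia.
  - reflexivity.
  - exact Hlast.
  - intros [|k] Hk He; [discriminate|].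
    apply Hxxww; [lia|]. rewrite Nat.even_succ, <- Nat.negb_even in He.
    now destruct (Nat.even k).
  - intros [|k] Hk He.
    + symmetry. apply (Hu A HA x y y w).
    + apply Hxyyw; [lia|]. rewrite Nat.even_succ, <- Nat.negb_even in He.
      now destruct (Nat.even k).
Qed.

Lemma directed_distributive_congruence_identity (Sg : signature) (Sigma : identity Sg -> Prop)
  (n : nat) :
  1 <= n -> directed_distributive Sg Sigma n ->
  forall A : algebra Sg, models A Sigma ->
  forall alpha beta gamma : carrier A -> carrier A -> Prop,
    congruence A alpha -> congruence A beta -> congruence A gamma ->
    forall x y : carrier A,
      alpha x y -> rcomp beta (rcomp gamma beta) x y ->
      alt_comp (rmeet alpha beta) (rmeet alpha gamma) (2 * n - 1) x y.
Proof.
  intros Hn [t Ht] A HA al be ga Hal Hbe Hga x y Hxy [a [Hxa [b [Hab Hby]]]].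
  pose proof Hal as (al_refl & al_sym & al_trans & _).
  pose proof Hbe as (be_refl & _ & be_trans & _).
  pose proof Hga as (ga_refl & _).
  assert (Habsorb : forall h q, h <= n -> al (ap3 A (t h) x q y) x).
  { intros h q Hh. apply al_trans with (ap3 A (t h) x q x).
    - apply congruence_ap3; auto.
    - destruct (Ht A HA x q y) as (_ & _ & Hxyx & _). rewrite Hxyx by exact Hh. apply al_refl. }
  set (e := interleave (fun h => ap3 A (t h) x b y) (fun h => ap3 A (t h) x a y)).
  assert (He0 : e 0 = x) by apply (Ht A HA x b y).
  assert (Hlast : e (2 * n - 1) = y).
  { unfold e. replace (2 * n - 1) with (2 * (n - 1) + 1) by lia.
    rewrite interleave_odd. replace (S (n - 1)) with n by lia. apply (Ht A HA x a y). }
  rewrite <- He0, <- Hlast. apply alt_comp_chain; intros h Hh; unfold e.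
  - rewrite interleave_even, interleave_odd. split.
    + apply al_trans with x; [apply Habsorb; lia | apply al_sym, Habsorb; lia].
    + apply be_trans with (ap3 A (t h) x y y); [apply congruence_ap3; auto|].
      destruct (Ht A HA x y y) as (_ & _ & _ & Hdir). rewrite Hdir by lia.
      apply congruence_ap3; auto.
  - replace (2 * h + 2) with (2 * S h) by lia.
    rewrite interleave_even, interleave_odd. split.
    + apply al_trans with x; [apply Habsorb; lia | apply al_sym, Habsorb; lia].
    + apply congruence_ap3; auto.
Qed.

Lemma directed_distributive_modular (Sg : signature) (Sigma : identity Sg -> Prop) (n : nat) :
  1 <= n -> directed_distributive Sg Sigma n -> modular Sg Sigma (2 * n - 1).
Proof.
  intros Hn [t Ht].
  set (xzw v := match v with X3 => X4 | Y3 => Z4 | Z3 => W4 end).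
  set (xyw v := match v with X3 => X4 | Y3 => Y4 | Z3 => W4 end).
  set (u := interleave (fun h => rename xzw (t h)) (fun h => rename xyw (t h))).
  exists u. intros A HA x y z w.
  assert (Hev : forall h x y z w, ap4 A (u (2 * h)) x y z w = ap3 A (t h) x z w).
  { intros. unfold u. now rewrite interleave_even, ap4_rename. }
  assert (Hod : forall h x y z w, ap4 A (u (2 * h + 1)) x y z w = ap3 A (t (S h)) x y w).
  { intros. unfold u. now rewrite interleave_odd, ap4_rename. }
  split; [|split; [|split; [|split]]].
  - intros k Hk. destruct (Ht A HA x y x) as (_ & _ & Hxyx & _).
    destruct (Nat.Even_or_Odd k) as [[h ->] | [h ->]];
      [rewrite Hev | rewrite Hod]; apply Hxyx; lia.
  - rewrite (Hev 0). apply (Ht A HA x z w).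
  - replace (2 * n - 1) with (2 * (n - 1) + 1) by lia.
    rewrite Hod. replace (S (n - 1)) with n by lia. apply (Ht A HA x y w).
  - intros k Hk He. destruct (Nat.Even_or_Odd k) as [[h ->] | [h ->]];
      [| now rewrite Nat.even_odd in He].
    replace (S (2 * h)) with (2 * h + 1) by lia.
    rewrite Hev, Hod. destruct (Ht A HA x x w) as (_ & _ & _ & Hdir). apply Hdir. lia.
  - intros k Hk He. destruct (Nat.Even_or_Odd k) as [[h ->] | [h ->]];
      [now rewrite Nat.even_even in He |].
    replace (S (2 * h + 1)) with (2 * S h) by lia.
    now rewrite Hev, Hod.
Qed.

Theorem theorem5p1 :
  (* (i) *)
  (forall n : nat, 2 <= n ->
     exists (S : signature) (Sigma : identity S -> Prop),
       locally_finite S Sigma /\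
       directed_distributive S Sigma n /\
       ~ reversed_modular S Sigma (2 * n - 1) /\
       ~ modular S Sigma (2 * n - 2)) /\
  (* (ii) *)
  (forall (S : signature) (Sigma : identity S -> Prop) (n : nat), 1 <= n ->
     directed_distributive S Sigma n ->
     (forall (A : algebra S), models A Sigma ->
      forall alpha beta gamma : carrier A -> carrier A -> Prop,
        congruence A alpha -> congruence A beta -> congruence A gamma ->
        forall x y : carrier A,
          alpha x y -> rcomp beta (rcomp gamma beta) x y ->
          alt_comp (rmeet alpha beta) (rmeet alpha gamma) (2 * n - 1) x y) /\
     modular S Sigma (2 * n - 1)).
Proof.
  split.
  - intros n Hn. exists sig_chain, (theory (chain_alg (n - 1))).
    pose proof (chain_not_reversed_modular (n - 1) ltac:(lia)) as Hnot_rev.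
    replace (2 * (n - 1) + 1) with (2 * n - 1) in Hnot_rev by lia.
    split; [|split; [|split]].
    + destruct (chain_elems (n - 1)) as [l Hl].
      exact (finite_algebra_locally_finite (chain_alg (n - 1)) (bot (n - 1)) l Hl).
    + pose proof (chain_directed_distributive (n - 1)) as Hdd.
      now replace (S (n - 1)) with n in Hdd by lia.
    + exact Hnot_rev.
    + intro Hmod. apply Hnot_rev. replace (2 * n - 1) with (S (2 * n - 2)) by lia.
      now apply modular_reversed_modular_succ.
  - intros Sg Sigma n Hn Hdd. split.
    + exact (directed_distributive_congruence_identity Sg Sigma n Hn Hdd).
    + exact (directed_distributive_modular Sg Sigma n Hn Hdd).
Qed.
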